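(* Let $(\Phi,\{\Gamma_x\}_{x\in D},D)$ be a labeled compact information algebra, let $x\in D$, $\psi\in\Gamma_x$ and $\phi\in\Phi_x$. Then $\psi\ll_x\phi$ if and only if $\psi\le\phi$.
   Context: A labeled information algebra $(\Phi,D)$ consists of a lattice $D$, a set $\Phi$ with a labeling $d:\Phi\to D$, a combination $\otimes:\Phi\times\Phi\to\Phi$ and a marginalization $(\phi,x)\mapsto\phi^{\downarrow x}$ defined for $x\le d(\phi)$, such that: $\otimes$ is associative and commutative; for each $s\in D$ there is $e_s$ with $d(e_s)=s$ and $e_s\otimes\phi=\phi$ whenever $d(\phi)=s$; $d(\phi\otimes\psi)=d(\phi)\vee d(\psi)$; $d(\phi^{\downarrow x})=x$; $(\phi^{\downarrow y})^{\downarrow x}=\phi^{\downarrow x}$ for $x\le y\le d(\phi)$; $(\phi\otimes\psi)^{\downarrow x}=\phi\otimes\psi^{\downarrow x\wedge y}$ when $d(\phi)=x$, $d(\psi)=y$; $e_y^{\downarrow x}=e_x$ for $x\le y$; $\phi\otimes\phi^{\downarrow x}=\phi$ for $x\le d(\phi)$. Let $\Phi_x=\{\phi:d(\phi)=x\}$, order $\psi\le\phi$ iff $\psi\otimes\phi=\phi$, and let $\ll_x$ be the way-below relation of the poset $(\Phi_x,\le)$ ($a\ll_x b$ iff for every directed $X\subseteq\Phi_x$ with $b\le\vee X$ there is $c\in X$ with $a\le c$). A labeled compact information algebra $(\Phi,\{\Gamma_x\}_{x\in D},D)$ is a labeled information algebra with $D$ having a top element $\top$, together with, for each $x\in D$,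 a set $\Gamma_x\subseteq\Phi_x$ closed under combination and containing $e_x$, such that: (convergency) every directed $X\subseteq\Gamma_x$ has a supremum $\vee X$ and $\vee X\in\Phi_x$; (density) $\phi=\vee\{\psi\in\Gamma_x:\psi\ll_x\phi\}$ for all $\phi\in\Phi_x$; (compactness) for every directed $X\subseteq\Gamma_x$ and $\phi\in\Gamma_x$ with $\phi\le\vee X$ there is $\psi\in X$ with $\phi\le\psi$. *)

From HB Require Import structures.
From mathcomp Require Import all_boot all_order.
Set Implicit Arguments. Unset Strict Implicit. Unset Printing Implicit Defensive.
Import Order.TTheory.
Local Open Scope order_scope.

(* Labeled information algebra over a lattice D.  Marginalization is given as a
   total function [marg], whose axioms are only imposed for x <= d(phi). *)
Record labeled_info_algebra (disp : Order.disp_t) (D : latticeType disp)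
    (Phi : Type) := LabeledInfoAlgebra {
  lab  : Phi -> D;
  comb : Phi -> Phi -> Phi;
  marg : Phi -> D -> Phi;
  neut : D -> Phi;
  comb_assoc : forall a b c, comb a (comb b c) = comb (comb a b) c;
  comb_comm  : forall a b, comb a b = comb b a;
  lab_neut   : forall s, lab (neut s) = s;
  neutral    : forall s phi, lab phi = s -> comb (neut s) phi = phi;
  lab_comb   : forall phi psi, lab (comb phi psi) = lab phi `|` lab psi;
  lab_marg   : forall phi x, x <= lab phi -> lab (marg phi x) = x;
  marg_trans : forall phi x y, x <= y -> y <= lab phi ->
                 marg (marg phi y) x = marg phi x;
  combination : forall phi psi x y, lab phi = x -> lab psi = y ->
                 marg (comb phi psi) x = comb phi (marg psi (x `&` y));
  marg_neut  : forall x y, x <= y -> marg (neut y) x = neut x;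
  idempotency : forall phi x, x <= lab phi -> comb phi (marg phi x) = phi
}.

Section Order.
Context (disp : Order.disp_t) (D : latticeType disp) (Phi : Type)
        (A : labeled_info_algebra D Phi).

Definition ile (psi phi : Phi) : Prop := comb A psi phi = phi.

Definition sub_lab (x : D) (X : Phi -> Prop) : Prop :=
  forall a, X a -> lab A a = x.

Definition directed (X : Phi -> Prop) : Prop :=
  (exists a, X a) /\
  (forall a b, X a -> X b -> exists c, X c /\ ile a c /\ ile b c).

Definition is_sup (x : D) (X : Phi -> Prop) (s : Phi) : Prop :=
  lab A s = x /\ (forall a, X a -> ile a s) /\
  (forall b, lab A b = x -> (forall a, X a -> ile a b) -> ile s b).

Definition way_below (x : D) (a b : Phi) : Prop :=
  forall X, sub_lab x X -> directed X ->
  forall s, is_sup x X s -> ile b s -> exists c, X c /\ ile a c.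

(* the additional structure of a labeled compact information algebra
   (D is required to have a top element by taking D : tLatticeType below) *)
Record compact_axioms (Gamma : D -> Phi -> Prop) : Prop := {
  Gamma_lab   : forall x, sub_lab x (Gamma x);
  Gamma_comb  : forall x a b, Gamma x a -> Gamma x b -> Gamma x (comb A a b);
  Gamma_neut  : forall x, Gamma x (neut A x);
  convergency : forall x X, sub_lab x X -> (forall a, X a -> Gamma x a) ->
                  directed X -> exists s, is_sup x X s;
  density     : forall x phi, lab A phi = x ->
                  is_sup x (fun psi => Gamma x psi /\ way_below x psi phi) phi;
  compactness : forall x X phi, (forall a, X a -> Gamma x a) -> directed X ->
                  Gamma x phi -> forall s, is_sup x X s -> ile phi s ->
                  exists psi, X psi /\ ile phi psi
}.
End Order.

(* A compact [psi] below [phi] is way below [phi]: given a directed [X] whose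
   supremum [s] dominates [phi], collect the compact elements way below some
   member of [X].  They form a directed family whose supremum [t] dominates [s],
   because by density every member of [X] is the supremum of the compact
   elements way below it.  Compactness of [psi <= t] then yields one of these
   compact elements above [psi], and it lies below a member of [X]. *)
From mathcomp Require Import all_boot all_order.
Import Order.TTheory.

Set Implicit Arguments.
Unset Strict Implicit.
Unset Printing Implicit Defensive.

Section InformationOrder.
Context (disp : Order.disp_t) (D : latticeType disp) (Phi : Type)
        (A : labeled_info_algebra D Phi).

Lemma marg_lab phi : marg A phi (lab A phi) = phi.
Proof.
have := combination (l := A) (phi := phi) (psi := neut A (lab A phi))
  erefl (lab_neut A _).
by rewrite meetxx marg_neut // comb_comm neutral.
Qed.

Lemma ile_refl phi : ile A phi phi.
Proof. by have := idempotency (l := A) (lexx (lab A phi)); rewrite marg_lab. Qed.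

Lemma ile_trans a b c : ile A a b -> ile A b c -> ile A a c.
Proof. by rewrite /ile => ab <-; rewrite comb_assoc ab. Qed.

Lemma neut_ile x b : lab A b = x -> ile A (neut A x) b.
Proof. exact: (neutral (l := A)). Qed.

Lemma comb_ile a b c : ile A a c -> ile A b c -> ile A (comb A a b) c.
Proof. by rewrite /ile => ac bc; rewrite -comb_assoc bc. Qed.

Lemma ile_combl a b : ile A a (comb A a b).
Proof. by rewrite /ile comb_assoc ile_refl. Qed.

Lemma ile_combr a b : ile A b (comb A a b).
Proof. by rewrite comb_comm; apply: ile_combl. Qed.

Lemma way_below_ile x a b : lab A b = x -> way_below A x a b -> ile A a b.
Proof.
move=> bx ab.
have Xx : sub_lab A x (eq^~ b) by move=> c ->.
have dX : directed A (eq^~ b).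
  split=> [|_ _ -> ->]; first by exists b.
  by exists b; split=> //; split; apply: ile_refl.
have bsup : is_sup A x (eq^~ b) b.
  by split=> //; split=> [_ -> | c _]; [apply: ile_refl | apply].
by have [c [-> //]] := ab _ Xx dX b bsup (ile_refl b).
Qed.

Lemma way_below_ile_trans x a b c :
  way_below A x a b -> ile A b c -> way_below A x a c.
Proof. by move=> ab bc X Xx dX s sX cs; exact: ab X Xx dX s sX (ile_trans bc cs). Qed.

Lemma way_below_neut x b : way_below A x (neut A x) b.
Proof.
move=> X Xx [[z Xz] _] s _ _; exists z; split=> //.
exact/neut_ile/Xx.
Qed.

Lemma way_below_comb x a b c :
  way_below A x a c -> way_below A x b c -> way_below A x (comb A a b) c.
Proof.
move=> ac bc X Xx dX s sX cs.
have [za [Xza aza]] := ac X Xx dX s sX cs.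
have [zb [Xzb bzb]] := bc X Xx dX s sX cs.
have [z [Xz [zaz zbz]]] := dX.2 za zb Xza Xzb.
by exists z; split=> //; apply: comb_ile;
  [apply: ile_trans aza zaz | apply: ile_trans bzb zbz].
Qed.

End InformationOrder.

Section CompactAlgebra.
Context (disp : Order.disp_t) (D : latticeType disp) (Phi : Type)
        (A : labeled_info_algebra D Phi) (Gamma : D -> Phi -> Prop)
        (HC : compact_axioms A Gamma).

Definition compact_approx (x : D) (X : Phi -> Prop) (g : Phi) : Prop :=
  Gamma x g /\ exists c, X c /\ way_below A x g c.

Lemma compact_approx_Gamma x X g : compact_approx x X g -> Gamma x g.
Proof. by case. Qed.

Lemma compact_approx_sub_lab x X : sub_lab A x (compact_approx x X).
Proof. by move=> g [Gg _]; apply: (Gamma_lab HC). Qed.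

Lemma compact_approx_directed x X :
  directed A X -> directed A (compact_approx x X).
Proof.
move=> [[c0 Xc0] dX]; split.
  exists (neut A x); split; first exact: (Gamma_neut HC).
  by exists c0; split; last apply: way_below_neut.
move=> g1 g2 [G1 [c1 [Xc1 g1c1]]] [G2 [c2 [Xc2 g2c2]]].
have [c [Xc [c1c c2c]]] := dX c1 c2 Xc1 Xc2.
exists (comb A g1 g2); split; last by split; [apply: ile_combl | apply: ile_combr].
split; first exact: (Gamma_comb HC).
by exists c; split=> //; apply: way_below_comb;
  [apply: way_below_ile_trans g1c1 c1c | apply: way_below_ile_trans g2c2 c2c].
Qed.

Lemma is_sup_ile_compact_approx x X s t : sub_lab A x X ->
  is_sup A x X s -> is_sup A x (compact_approx x X) t -> ile A s t.
Proof.
move=> Xx [_ [_ s_least]] [tx [t_ub _]].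
apply: s_least => // c Xc.
have [_ [_ c_least]] := density HC (Xx c Xc).
apply: c_least => // g [Gg gc]; apply: t_ub.
by split=> //; exists c.
Qed.

Lemma compact_ile_way_below x psi phi : Gamma x psi -> lab A phi = x ->
  ile A psi phi -> way_below A x psi phi.
Proof.
move=> Gpsi phix psiphi X Xx dX s sX phis.
have YGamma : forall g, compact_approx x X g -> Gamma x g.
  exact: compact_approx_Gamma.
have dY : directed A (compact_approx x X) by apply: compact_approx_directed.
have [t tY] := convergency HC (@compact_approx_sub_lab x X) YGamma dY.
have psit : ile A psi t.
  exact: ile_trans (ile_trans psiphi phis) (is_sup_ile_compact_approx Xx sX tY).
have [g [[_ [c [Xc gc]]] psig]] := compactness HC YGamma dY Gpsi tY psit.
by exists c; split; last exact: ile_trans psig (way_below_ile (Xx c Xc) gc).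
Qed.

End CompactAlgebra.

Theorem lemma4p3 (disp : Order.disp_t) (D : tLatticeType disp) (Phi : Type)
  (A : labeled_info_algebra D Phi) (Gamma : D -> Phi -> Prop)
  (HC : compact_axioms A Gamma) (x : D) (psi phi : Phi) :
  Gamma x psi -> lab A phi = x ->
  (way_below A x psi phi <-> ile A psi phi).
Proof.
move=> Gpsi phix; split; first exact: way_below_ile.
exact: (compact_ile_way_below HC Gpsi phix).
Qed.
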